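(* Let $d,\mathfrak d,\mathfrak L\in\mathbb N$, $L\in\mathbb R$, $u\in[-\infty,\infty)$, $v\in(u,\infty]$, let $D\subseteq\mathbb R^d$ be a set, let $f\colon D\to[u,v]\cap\mathbb R$ satisfy $|f(x)-f(y)|\le L\sum_{i=1}^d|x_i-y_i|$ for all $x,y\in D$, let $\mathcal M\subseteq D$ satisfy $|\mathcal M|\in\{2,3,\dots\}$, let $l=(l_0,\dots,l_{\mathfrak L})\in\mathbb N^{\mathfrak L+1}$ satisfy $\mathfrak L\ge|\mathcal M|+1$, $\sum_{i=1}^{\mathfrak L}l_i(l_{i-1}+1)\le\mathfrak d$, $l_0=d$, $l_{\mathfrak L}=1$, $l_1\ge 2d|\mathcal M|$, $l_k\ge 2|\mathcal M|-2k+3$ for all $k\in\{2,\dots,|\mathcal M|\}$, and $l_i\ge 2$ for all $i\in\mathbb N\cap(|\mathcal M|,\mathfrak L)$. Then there exists $\theta\in\mathbb R^{\mathfrak d}$ such that $\|\theta\|_\infty\le\max\{1,L,\sup_{z\in\mathcal M}\|z\|_\infty,2\sup_{z\in\mathcal M}|f(z)|\}$ and $$\sup_{x\in D}|f(x)-\mathscr N^{\theta,l}_{u,v}(x)|\le 2L\Bigl[\sup_{x\in D}\Bigl(\inf_{y\in\mathcal M}\sum_{i=1}^d|x_i-y_i|\Bigr)\Bigr].$$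
   Context: $\|\cdot\|_\infty$ is the maximum norm. For $r,s\in\mathbb N$, $k\in\mathbb N_0$, $\theta\in\mathbb R^{\mathfrak d}$ with $\mathfrak d\ge k+rs+r$, $\mathcal A^{\theta,k}_{r,s}\colon\mathbb R^s\to\mathbb R^r$ has $i$-th component $x\mapsto\sum_{j=1}^s\theta_{k+(i-1)s+j}x_j+\theta_{k+rs+i}$. $\mathfrak C_{u,v,n}$ applies $y\mapsto\max\{u,\min\{y,v\}\}$ componentwise on $\mathbb R^n$ and $\mathfrak R_n$ applies $y\mapsto\max\{y,0\}$ componentwise. For $l=(l_0,\dots,l_{\mathfrak L})$ with $\mathfrak d\ge\sum_kl_k(l_{k-1}+1)$ and $s_k=\sum_{j=1}^kl_j(l_{j-1}+1)$, $\mathscr N^{\theta,l}_{u,v}=\mathfrak C_{u,v,l_{\mathfrak L}}\circ\mathcal A^{\theta,s_{\mathfrak L-1}}_{l_{\mathfrak L},l_{\mathfrak L-1}}\circ\mathfrak R_{l_{\mathfrak L-1}}\circ\cdots\circ\mathfrak R_{l_1}\circ\mathcal A^{\theta,0}_{l_1,l_0}\colon\mathbb R^{l_0}\to\mathbb R^{l_{\mathfrak L}}$. *)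

From HB Require Import structures.
From mathcomp Require Import all_boot all_order all_algebra.
From mathcomp Require Import all_classical all_reals all_analysis.
Set Implicit Arguments. Unset Strict Implicit. Unset Printing Implicit Defensive.
Import Order.TTheory GRing.Theory Num.Theory.
Local Open Scope ring_scope.

Section Defs.
Variable R : realType.

(* extend a finite vector / parameter vector by zero to nat-indexed sequences
   (0-based indexing: component j of the paper is index j-1 here) *)
Definition ext (n : nat) (g : 'I_n -> R) : nat -> R :=
  fun j => odflt 0 (omap g (insub j)).

Definition affine (th : nat -> R) (k r s : nat) (x : nat -> R) : nat -> R :=
  fun i => \sum_(j < s) th (k + i * s + j)%N * x j + th (k + r * s + i)%N.

Definition relu (x : nat -> R) : nat -> R := fun i => Num.max (x i) 0.

Definition clip (u v : \bar R) (y : R) : R := fine (Order.max u (Order.min y%:E v)).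

(* realization of the hidden and output layers: k = offset, prev = previous width *)
Fixpoint layers (th : nat -> R) (u v : \bar R) (k prev : nat) (rest : seq nat)
  (x : nat -> R) : nat -> R :=
  match rest with
  | [::] => x
  | [:: n] => fun i => clip u v (affine th k n prev x i)
  | n :: rest' => layers th u v (k + n * (prev + 1))%N n rest'
                    (relu (affine th k n prev x))
  end.

(* N^{theta,l}_{u,v} for networks with one-dimensional output (l_L = 1),
   applied to x in R^d (d = l_0); returns the unique output component *)
Definition realization (dd d : nat) (th : 'I_dd -> R) (l : seq nat)
  (u v : \bar R) (x : 'rV[R]_d) : R :=
  match l with
  | [::] => 0
  | l0 :: rest => layers (ext th) u v 0 l0 rest (ext (fun j => x ord0 j)) 0%N
  end.

Definition dist1 (d : nat) (x y : 'rV[R]_d) : R :=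
  \sum_(i < d) `|x ord0 i - y ord0 i|.

Definition normInf (d : nat) (x : 'rV[R]_d) : R :=
  \big[Num.max/0]_(i < d) `|x ord0 i|.

End Defs.

(* With y_0, ..., y_(m-1) the points of M, the network computes the clipped
   lower McShane extension x |-> max_r (f y_r - L |x - y_r|_1) of f from M.
   The first layer produces the numbers +-(x_i - y_(r,i)), whose ReLUs sum
   block by block to the distances |x - y_r|_1. Each of the next m - 1 layers
   folds one more cone into a running maximum, by
   max s a = relu a - relu (- a) + relu (s - a), while passing on the distances
   still needed; later layers pass on the maximum s as relu s - relu (- s).
   The Lipschitz property puts every cone below f, and the r-th cone within
   2 L |x - y_r|_1 of f x; clipping to [u, v], where f takes its values, only
   decreases the error. All weights lie in {0, +-1, +-L}, and the biases are
   coordinates of points of M, values f y_r or f y_0 - f y_1, which gives the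
   bound on the parameters. *)

From HB Require Import structures.
From mathcomp Require Import all_boot all_order all_algebra.
From mathcomp Require Import all_classical all_reals all_analysis.
From mathcomp Require Import zify ring lra.
Set Implicit Arguments. Unset Strict Implicit. Unset Printing Implicit Defensive.

Import Order.TTheory GRing.Theory Num.Theory.
Local Open Scope ring_scope.
Local Open Scope classical_set_scope.

Section Dot.
Variable R : realType.
Implicit Types (w z : nat -> R).

Definition dot (n : nat) w z : R := \sum_(j < n) w j * z j.

Definition delta (q : nat) : nat -> R := fun j => (j == q)%:R.

Lemma dot_delta n q z : (q < n)%N -> dot n (delta q) z = z q.
Proof.
move=> lt_qn; rewrite /dot; under eq_bigr do rewrite /delta mulr_natl mulrb.
by rewrite -big_mkcond big_ord1_eq lt_qn.
Qed.

Lemma dotD n w1 w2 z : dot n (fun j => w1 j + w2 j) z = dot n w1 z + dot n w2 z.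
Proof. by rewrite /dot -big_split; apply: eq_bigr => j _; rewrite mulrDl. Qed.

Lemma dotN n w z : dot n (fun j => - w j) z = - dot n w z.
Proof. by rewrite /dot -sumrN; apply: eq_bigr => j _; rewrite mulNr. Qed.

Lemma dotZ n a w z : dot n (fun j => a * w j) z = a * dot n w z.
Proof. by rewrite /dot mulr_sumr; apply: eq_bigr => j _; rewrite mulrA. Qed.

Lemma dot_ext n w z1 z2 : (forall j, (j < n)%N -> z1 j = z2 j) -> dot n w z1 = dot n w z2.
Proof. by move=> eqz; apply: eq_bigr => j _; rewrite eqz. Qed.

Lemma dot_interval n a b z : (a + b <= n)%N ->
  dot n (fun j => (a <= j < a + b)%N%:R) z = \sum_(q < b) z (a + q)%N.
Proof.
move=> le_abn; rewrite /dot; under eq_bigr do rewrite mulr_natl mulrb.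
rewrite -big_mkcond /= -(big_mkord (fun i => a <= i < a + b)%N z).
have -> : \sum_(q < b) z (a + q)%N = \sum_(a <= j < a + b) z j.
  by symmetry; rewrite -{1}[a]add0n big_addn addKn big_mkord; apply: eq_bigr => q _; rewrite addnC.
by rewrite [RHS](big_nat_widenl _ 0) // [RHS](big_nat_widen _ _ n).
Qed.

End Dot.
Arguments delta {R}.

Section Packing.
Variables (R : realType) (u v : \bar R).
Implicit Types (W : nat -> nat -> nat -> R) (B : nat -> nat -> R) (z : nat -> R).

Definition layer_map W B (k n : nat) z : nat -> R := fun i => dot n (W k i) z + B k i.

Fixpoint eval_net W B (k n : nat) (ls : seq nat) z : nat -> R :=
  match ls with
  | [::] => z
  | [:: _] => fun i => clip u v (layer_map W B k n z i)
  | w :: ls' => eval_net W B k.+1 w ls' (relu (layer_map W B k n z))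
  end.

(* Layer [k], of width [w] and fed by [n] neurons, occupies [w * n] row-major
   weights followed by [w] biases: the layout read by [affine]. *)
Fixpoint pack W B (k n : nat) (ls : seq nat) (p : nat) : R :=
  match ls with
  | [::] => 0
  | w :: ls' => if (p < w * n)%N then W k (p %/ n)%N (p %% n)%N
                else if (p < w * (n + 1))%N then B k (p - w * n)%N
                else pack W B k.+1 w ls' (p - w * (n + 1))%N
  end.

Fixpoint pack_size (n : nat) (ls : seq nat) : nat :=
  if ls is w :: ls' then (w * (n + 1) + pack_size w ls')%N else 0%N.

Lemma pack_size_sum n ls : pack_size n ls =
  (\sum_(1 <= i < (size ls).+1) nth 0 (n :: ls) i * (nth 0 (n :: ls) i.-1 + 1))%N.
Proof.
elim: ls n => [|w ls IH] n /=; first by rewrite big_geq.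
rewrite big_ltn // IH [in RHS]big_add1 /=; congr (_ + _)%N.
by apply: eq_big_nat => -[|i].
Qed.

Lemma pack_out_of_range W B ls k n p : (pack_size n ls <= p)%N -> pack W B k n ls p = 0.
Proof.
elim: ls k n p => [//|w ls IH] k n p /= le_sp.
rewrite ifN ?ifN -?leqNgt; [|nia|nia].
by rewrite IH //; lia.
Qed.

Lemma norm_pack_le W B (C : R) : 0 <= C ->
  (forall k i j, `|W k i j| <= C) -> (forall k i, `|B k i| <= C) ->
  forall ls k n p, `|pack W B k n ls p| <= C.
Proof.
move=> C0 WC BC; elim=> [|w ls IH] k n p /=; first by rewrite normr0.
by case: ifP => _; [|case: ifP].
Qed.

Lemma affine_pack W B th off k n w ls x i :
  (forall p, th (off + p)%N = pack W B k n (w :: ls) p) -> (i < w)%N ->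
  affine th off w n x i = layer_map W B k n x i.
Proof.
move=> th_pack lt_iw; rewrite /affine /layer_map /dot; congr (_ + _).
  apply: eq_bigr => j _; congr (_ * _); rewrite -addnA th_pack /=.
  have lt_jn := ltn_ord j.
  have -> : (i * n + j < w * n)%N by nia.
  by rewrite divnMDl ?modnMDl ?divn_small ?modn_small ?addn0 //; lia.
rewrite -addnA th_pack /= ifN -?leqNgt ?leq_addr // ifT ?addKn //.
by rewrite mulnDr muln1 ltn_add2l.
Qed.

Lemma eval_net_ext W B k n ls z1 z2 : ls != [::] ->
  (forall j, (j < n)%N -> z1 j = z2 j) ->
  eval_net W B k n ls z1 = eval_net W B k n ls z2.
Proof.
move=> ls_nnil eqz; have eq_map : layer_map W B k n z1 = layer_map W B k n z2.
  by apply: funext => i; rewrite /layer_map; congr (_ + _); exact: dot_ext.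
by case: ls ls_nnil => [|w [|w' ls]] //= _; rewrite eq_map.
Qed.

Lemma eval_net_cons2 W B k n w w' ls z :
  eval_net W B k n [:: w, w' & ls] z = eval_net W B k.+1 w (w' :: ls) (relu (layer_map W B k n z)).
Proof. by []. Qed.

Lemma layers_pack W B ls th off k n x i :
  (forall p, th (off + p)%N = pack W B k n ls p) -> (i < last n ls)%N ->
  layers th u v off n ls x i = eval_net W B k n ls x i.
Proof.
elim: ls off k n x i => [//|w ls IH] off k n x i th_pack lt_i /=.
case: ls IH th_pack lt_i => [|w' ls] IH th_pack lt_i; first by rewrite (affine_pack _ th_pack).
rewrite (IH _ k.+1) //; last first.
  move=> p; rewrite -addnA th_pack /= addKn.
  have -> : (w * (n + 1) + p < w * n)%N = false by nia.
  by have -> : (w * (n + 1) + p < w * (n + 1))%N = false by lia.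
congr (_ i); apply: eval_net_ext => // j lt_jw.
by rewrite /relu (affine_pack _ th_pack).
Qed.

End Packing.

Section RealFacts.
Variable R : realType.
Implicit Types (a s : R).

Lemma relu_add_reluN a : Num.max a 0 + Num.max (- a) 0 = `|a|.
Proof.
have [a_ge0|a_lt0] := lerP 0 a.
  by rewrite (max_r (_ : - a <= 0)) ?addr0 ?ger0_norm // oppr_le0.
by rewrite (max_l (_ : 0 <= - a)) ?add0r ?ltr0_norm // oppr_ge0 ltW.
Qed.

Lemma relu_sub_reluN a : Num.max a 0 - Num.max (- a) 0 = a.
Proof.
have [a_ge0|a_lt0] := lerP 0 a.
  by rewrite (max_r (_ : - a <= 0)) ?subr0 // oppr_le0.
by rewrite (max_l (_ : 0 <= - a)) ?sub0r ?opprK // oppr_ge0 ltW.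
Qed.

Lemma addr_relu_subr a s : a + Num.max (s - a) 0 = Num.max s a.
Proof.
have [le_as|lt_sa] := lerP a s; first by rewrite max_l ?subr_ge0 // addrC subrK.
by rewrite max_r ?addr0 // subr_le0 ltW.
Qed.

Lemma dist_clip_le (u v : \bar R) a s : u != +oo%E -> v != -oo%E ->
  (u <= a%:E <= v)%E -> `|a - clip u v s| <= `|a - s|.
Proof.
move=> + + /andP[ua av]; rewrite /clip.
have clip_below b : a <= b -> `|a - Num.min s b| <= `|a - s|.
  move=> le_ab; have [//|lt_bs] := lerP s b.
  by rewrite !ler0_norm ?subr_le0 //; lra.
have clip_above b t : b <= a -> `|a - Num.max b t| <= `|a - t|.
  move=> le_ba; have [//|lt_tb] := lerP b t.
  by rewrite !ger0_norm ?subr_ge0 //; lra.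
case: u ua => [b||] ua // _; case: v av => [e||] av // _; rewrite ?lee_fin in ua av.
- by rewrite -EFin_min -EFin_max /=; apply: le_trans (clip_above _ _ ua) (clip_below _ av).
- by rewrite (@min_l _ _ s%:E) ?leey // -EFin_max /=; apply: clip_above.
- by rewrite -EFin_min (@max_r _ _ -oo%E) ?leNye //=; apply: clip_below.
- by rewrite (@min_l _ _ s%:E) ?leey // (@max_r _ _ -oo%E) ?leNye.
Qed.

Lemma norm_nat_bool_le (b : bool) : `|b%:R : R| <= 1.
Proof. by case: b; rewrite ?normr1 ?normr0. Qed.

End RealFacts.

Section Rows.
Variables (R : realType) (d : nat).
Implicit Types (a b z : 'rV[R]_d).

Lemma ext_ord n (g : 'I_n -> R) (i : 'I_n) : ext g i = g i.
Proof. by rewrite /ext valK. Qed.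

Lemma norm_ext_le_normInf z q : `|ext (fun j => z ord0 j) q| <= normInf z.
Proof.
rewrite /ext /normInf; case: insubP => [i _ _|_] /=.
  exact: (le_bigmax _ (fun i => `|z ord0 i|)).
by rewrite normr0 bigmax_ge_id.
Qed.

Lemma dist1_ge0 a b : 0 <= dist1 a b.
Proof. exact: sumr_ge0. Qed.

Lemma dist1C a b : dist1 a b = dist1 b a.
Proof. by apply: eq_bigr => i _; rewrite distrC. Qed.

Lemma dist1_gt0 a b : a != b -> 0 < dist1 a b.
Proof.
move=> neq_ab; rewrite lt_def dist1_ge0 andbT; apply: contra neq_ab => /eqP dist0.
apply/eqP/rowP => i; apply/eqP; rewrite -subr_eq0 -normr_eq0.
by apply/eqP; move: dist0 => /psumr_eq0P; apply.
Qed.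

End Rows.

Section Cones.
Variables (R : realType) (d : nat) (L : R) (y : nat -> 'rV[R]_d) (c : nat -> R).
Variable x : 'rV[R]_d.

Definition cone r := c r - L * dist1 x (y r).

Fixpoint cone_max k := if k is k'.+1 then Num.max (cone_max k') (cone k') else cone 0.

Lemma cone_max1 : cone_max 1 = cone 0.
Proof. exact: maxxx. Qed.

Lemma le_cone_max r k : (r < k)%N -> cone r <= cone_max k.
Proof.
elim: k => [//|k IH]; rewrite ltnS leq_eqVlt => /predU1P[->|lt_rk] /=.
  by rewrite le_max lexx orbT.
by rewrite le_max IH.
Qed.

Lemma cone_max_le t k : (0 < k)%N -> (forall r, (r < k)%N -> cone r <= t) -> cone_max k <= t.
Proof.
elim: k => [//|[|k] IH] _ cone_le /=; first by rewrite maxxx cone_le.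
by rewrite ge_max cone_le // andbT IH // => r lt_rk; rewrite cone_le // ltnW.
Qed.

End Cones.

Section Construction.
Variables (R : realType) (d m LL : nat) (L : R) (y : nat -> 'rV[R]_d) (c : nat -> R).

Definition ycoord r : nat -> R := ext (fun j => y r ord0 j).

Definition sgn q : R := if (q < d)%N then 1 else -1.

(* Neuron [r * 2d + q] of the first layer computes [sgn q * (x - y r)] at
   coordinate [q %% d], so that its block of [2d] neurons sums after ReLU to the
   l^1 distance from [x] to [y r]. *)
Definition input_weight i : nat -> R :=
  if (i < m * (2 * d))%N then fun j => sgn (i %% (2 * d))%N * delta (i %% (2 * d) %% d)%N j
  else fun=> 0.

Definition input_bias i : R :=
  if (i < m * (2 * d))%N then - sgn (i %% (2 * d))%N * ycoord (i %/ (2 * d))%N (i %% (2 * d) %% d)%N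
  else 0.

(* Hidden layer [k] carries the distances to [y r], [k <= r < m], read off by
   [dist_weight k r], and the running maximum [s] of the cones, read off by
   [max_weight k] and [max_bias k]. For [2 <= k <= m], [max s a] is stored as
   [relu a - relu (- a) + relu (s - a)] in neurons 0, 1, 2 and the distance to
   [y r] in neuron [3 + r - k]; beyond [m], [s] is stored as [relu s - relu (- s)]. *)
Definition dist_weight k r : nat -> R :=
  if k == 1%N then fun j => (r * (2 * d) <= j < r * (2 * d) + 2 * d)%N%:R
  else delta (3 + r - k).

Definition max_weight k : nat -> R :=
  if k == 1%N then fun j => - L * dist_weight 1 0 j
  else if (k <= m)%N then fun j => delta 0 j - delta 1 j + delta 2 j
  else fun j => delta 0 j - delta 1 j.

Definition max_bias k : R := if k == 1%N then c 0 else 0.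

(* [net_weight k] and [net_bias k] define layer [k + 1] from the readouts of
   layer [k]; layer 0 is the input. *)
Definition net_weight k i : nat -> R :=
  if k == 0%N then input_weight i
  else if k.+1 == LL then (if i == 0%N then max_weight k else fun=> 0)
  else if (k < m)%N then
    match i with
    | 0 => fun j => - L * dist_weight k k j
    | 1 => fun j => L * dist_weight k k j
    | 2 => fun j => max_weight k j + L * dist_weight k k j
    | i'.+3 => if (k.+1 + i' < m)%N then dist_weight k (k.+1 + i') else fun=> 0
    end
  else match i with 0 => max_weight k | 1 => fun j => - max_weight k j | _ => fun=> 0 end.

Definition net_bias k i : R :=
  if k == 0%N then input_bias i
  else if k.+1 == LL then (if i == 0%N then max_bias k else 0)
  else if (k < m)%N then match i with 0 => c k | 1 => - c k | 2 => max_bias k - c k | _ => 0 end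
  else match i with 0 => max_bias k | 1 => - max_bias k | _ => 0 end.

Section Realization.
Variables (u v : \bar R) (x : 'rV[R]_d) (l : seq nat).
Hypothesis m_gt0 : (0 < m)%N.
Hypothesis lt_mLL : (m < LL)%N.
Hypothesis size_l : size l = LL.+1.
Hypothesis l_last : nth 0%N l LL = 1%N.
Hypothesis l_1 : (2 * d * m <= nth 0 l 1)%N.
Hypothesis l_le_m : forall k, (2 <= k <= m)%N -> (2 * m + 3 - 2 * k <= nth 0 l k)%N.
Hypothesis l_gt_m : forall k, (m < k < LL)%N -> (2 <= nth 0 l k)%N.

Local Notation lw k := (nth 0%N l k).
Local Notation X := (ext (fun j => x ord0 j)).
Local Notation cone := (cone L y c x).
Local Notation cone_max := (cone_max L y c x).

Definition layer_invariant k z :=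
  dot (lw k) (max_weight k) z + max_bias k = cone_max (minn k m) /\
  forall r, (k <= r < m)%N -> dot (lw k) (dist_weight k r) z = dist1 x (y r).

Lemma first_layer_neuron r q : (r < m)%N -> (q < 2 * d)%N ->
  layer_map net_weight net_bias 0 d X (r * (2 * d) + q)%N =
    sgn q * (X (q %% d)%N - ycoord r (q %% d)%N).
Proof.
move=> lt_rm lt_q2d; have d_gt0 : (0 < d)%N by lia.
rewrite /layer_map /net_weight /net_bias /input_weight /input_bias /=.
have -> : (r * (2 * d) + q < m * (2 * d))%N by nia.
rewrite modnMDl modn_small // divnMDl ?divn_small ?addn0 //; last lia.
by rewrite dotZ dot_delta ?ltn_mod //; ring.
Qed.

Lemma first_layer_dist r : (r < m)%N ->
  dot (lw 1) (dist_weight 1 r) (relu (layer_map net_weight net_bias 0 d X)) = dist1 x (y r).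
Proof.
move=> lt_rm; rewrite /dist_weight /= dot_interval; last by nia.
under eq_bigr => q _ do rewrite /relu first_layer_neuron //.
have -> : (2 * d = d + d)%N by lia.
rewrite big_split_ord /= /dist1 -big_split /=; apply: eq_bigr => i _.
have lt_id := ltn_ord i.
rewrite /sgn lt_id ifN -?leqNgt ?leq_addr // modnDl modn_small //.
by rewrite /ycoord !ext_ord mul1r mulN1r -relu_add_reluN.
Qed.

Lemma invariant_layer1 : layer_invariant 1 (relu (layer_map net_weight net_bias 0 d X)).
Proof.
split=> [|r /andP[_ lt_rm]]; last exact: first_layer_dist.
rewrite /max_weight /max_bias /= dotZ first_layer_dist // (minn_idPl m_gt0) cone_max1.
by rewrite /cone addrC mulNr.
Qed.

Lemma invariant_step_lt k z : (0 < k < m)%N -> layer_invariant k z ->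
  layer_invariant k.+1 (relu (layer_map net_weight net_bias k (lw k) z)).
Proof.
move=> /andP[k_gt0 lt_km] []; rewrite (minn_idPl (ltnW lt_km)) => S_k D_k.
have k_neq0 : (k == 0%N) = false by lia.
have kS_neqL : (k.+1 == LL) = false by lia.
have kS_neq1 : (k.+1 == 1%N) = false by lia.
have D_kk : dot (lw k) (dist_weight k k) z = dist1 x (y k) by rewrite D_k ?leqnn.
have neuron0 : layer_map net_weight net_bias k (lw k) z 0 = cone k.
  by rewrite /layer_map /net_weight /net_bias k_neq0 kS_neqL lt_km dotZ D_kk /cone; ring.
have neuron1 : layer_map net_weight net_bias k (lw k) z 1 = - cone k.
  by rewrite /layer_map /net_weight /net_bias k_neq0 kS_neqL lt_km dotZ D_kk /cone; ring.
have neuron2 : layer_map net_weight net_bias k (lw k) z 2 = cone_max k - cone k.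
  rewrite /layer_map /net_weight /net_bias k_neq0 kS_neqL lt_km dotD dotZ D_kk.
  by rewrite -S_k /cone; ring.
have neuron_dist r : (k < r)%N -> (r < m)%N ->
    layer_map net_weight net_bias k (lw k) z (3 + r - k.+1) = dist1 x (y r).
  move=> lt_kr lt_rm; have -> : (3 + r - k.+1 = (r - k.+1).+3)%N by lia.
  rewrite /layer_map /net_weight /net_bias k_neq0 kS_neqL lt_km /= subnKC // lt_rm addr0.
  by rewrite D_k // ltnW.
have width : (2 * m + 3 - 2 * k.+1 <= lw k.+1)%N by apply: l_le_m; lia.
split=> [|r /andP[lt_kr lt_rm]].
  rewrite /max_weight /max_bias kS_neq1 lt_km /= !dotD dotN !dot_delta; [|lia..].
  rewrite /relu neuron0 neuron1 neuron2 addr0 relu_sub_reluN addr_relu_subr.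
  by rewrite (minn_idPl lt_km).
rewrite /dist_weight kS_neq1 dot_delta; last lia.
by rewrite /relu neuron_dist // max_l ?dist1_ge0.
Qed.

Lemma invariant_step_ge k z : (m <= k)%N -> (k.+1 < LL)%N -> layer_invariant k z ->
  layer_invariant k.+1 (relu (layer_map net_weight net_bias k (lw k) z)).
Proof.
move=> le_mk lt_kSLL []; rewrite (minn_idPr le_mk) => S_k _.
have k_neq0 : (k == 0%N) = false by lia.
have kS_neqL : (k.+1 == LL) = false by lia.
have k_ltm : (k < m)%N = false by lia.
have neuron0 : layer_map net_weight net_bias k (lw k) z 0 = cone_max m.
  by rewrite /layer_map /net_weight /net_bias k_neq0 kS_neqL k_ltm.
have neuron1 : layer_map net_weight net_bias k (lw k) z 1 = - cone_max m.
  by rewrite /layer_map /net_weight /net_bias k_neq0 kS_neqL k_ltm /= dotN -S_k opprD.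
have width : (2 <= lw k.+1)%N by apply: l_gt_m; lia.
split=> [|r /andP[lt_kr lt_rm]]; last lia.
have [kS_neq1 kS_gtm] : (k.+1 == 1%N) = false /\ (k.+1 <= m)%N = false by split; lia.
rewrite /max_weight /max_bias kS_neq1 kS_gtm dotD dotN !dot_delta; [|lia..].
by rewrite /relu neuron0 neuron1 addr0 relu_sub_reluN (minn_idPr (leqW le_mk)).
Qed.

Lemma invariant_step k z : (0 < k)%N -> (k.+1 < LL)%N -> layer_invariant k z ->
  layer_invariant k.+1 (relu (layer_map net_weight net_bias k (lw k) z)).
Proof.
move=> k_gt0 lt_kSLL; have [lt_km|le_mk] := ltnP k m.
  by apply: invariant_step_lt; rewrite k_gt0.
exact: invariant_step_ge.
Qed.

Lemma eval_net_invariant n k z : (k + n = LL.-1)%N -> (0 < k)%N -> layer_invariant k z ->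
  eval_net u v net_weight net_bias k (lw k) (drop k.+1 l) z 0 = clip u v (cone_max m).
Proof.
elim: n k z => [|n IH] k z kn k_gt0 inv_z.
  have [S_k _] := inv_z; rewrite (drop_nth 0%N) ?drop_oversize ?size_l; [|lia..].
  have [k_neq0 kS_eqL] : (k == 0%N) = false /\ k.+1 == LL by split; lia.
  by rewrite /= /layer_map /net_weight /net_bias k_neq0 kS_eqL /= S_k (minn_idPr _) //; lia.
rewrite (drop_nth 0%N) ?size_l; last lia.
rewrite [drop k.+2 l](drop_nth 0%N) ?size_l; last lia.
rewrite eval_net_cons2 -(drop_nth 0%N) ?size_l; last lia.
by apply: IH; [lia | lia | apply: invariant_step => //; lia].
Qed.

Lemma realization_eq dd (th : 'I_dd -> R) : nth 0%N l 0 = d ->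
  (forall p : 'I_dd, th p = pack net_weight net_bias 0 d (behead l) p) ->
  (pack_size d (behead l) <= dd)%N ->
  realization th l u v x = clip u v (cone_max m).
Proof.
move=> l_0 th_pack pack_le.
have l_eq : l = d :: behead l by move: size_l l_0; case: (l) => [|? ?] //= _ ->.
rewrite /realization l_eq (@layers_pack _ u v net_weight net_bias _ _ _ 0); last 2 first.
- move=> p; rewrite add0n /ext; case: insubP => [i _ <-|p_ge] /=; first exact: th_pack.
  by rewrite pack_out_of_range // (leq_trans pack_le) // leqNgt.
- by move: (nth_last 0%N l); rewrite size_l l_last l_eq /= => <-.
rewrite -drop1 (drop_nth 0%N) ?size_l; last lia.
rewrite [drop 2 l](drop_nth 0%N) ?size_l; last lia.
rewrite eval_net_cons2 -(drop_nth 0%N) ?size_l; last lia.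
by apply: (eval_net_invariant (n := LL.-1 - 1)); [lia | lia | exact: invariant_layer1].
Qed.

End Realization.
Section Bounds.
Variable C : R.
Hypothesis m_gt0 : (0 < m)%N.
Hypothesis C_ge1 : 1 <= C.
Hypothesis L_ge0 : 0 <= L.
Hypothesis L_leC : L <= C.
Hypothesis ycoord_le : forall r q, (r < m)%N -> `|ycoord r q| <= C.
Hypothesis c_le : forall r, (r < m)%N -> 2 * `|c r| <= C.

Lemma norm_sgn q : `|sgn q| = 1.
Proof. by rewrite /sgn; case: ifP; rewrite ?normrN normr1. Qed.

Lemma norm_dist_weight_le k r j : `|dist_weight k r j| <= 1.
Proof. by rewrite /dist_weight; case: ifP => _; apply: norm_nat_bool_le. Qed.

Lemma norm_scaled_dist_weight_le k r j : `|L * dist_weight k r j| <= C.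
Proof.
rewrite normrM (ger0_norm L_ge0); apply: le_trans L_leC.
by rewrite -[leRHS]mulr1 ler_wpM2l ?norm_dist_weight_le.
Qed.

Lemma norm_max_weight_le k j : `|max_weight k j| <= C.
Proof.
have C_ge0 : 0 <= C := le_trans ler01 C_ge1.
rewrite /max_weight; case: ifP => _; first by rewrite mulNr normrN norm_scaled_dist_weight_le.
by case: ifP => _; case: j => [|[|[|j]]];
  rewrite /delta ?mulr0n ?mulr1n ?subr0 ?addr0 ?add0r ?sub0r ?normrN ?normr1 ?normr0.
Qed.

Lemma max_dist_weight_disjoint k j : (0 < k)%N -> max_weight k j = 0 \/ dist_weight k k j = 0.
Proof.
move=> k_gt0; rewrite /max_weight /dist_weight; have [->|k_neq1] := eqVneq k 1%N.
  rewrite eqxx /=; have [j_lt|j_ge] := ltnP j (2 * d).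
    by right; have -> : (1 * (2 * d) <= j < 1 * (2 * d) + 2 * d)%N = false by lia.
  by left; rewrite mulr0.
rewrite addnK; have [->|j_neq3] := eqVneq j 3%N.
  by left; case: ifP => _; rewrite /delta ?mulr0n ?subr0 ?addr0.
by right; rewrite /delta (negbTE j_neq3).
Qed.

Lemma norm_max_dist_weight_le k j : (0 < k)%N -> `|max_weight k j + L * dist_weight k k j| <= C.
Proof.
case/(max_dist_weight_disjoint j) => ->; rewrite ?mulr0 ?addr0 ?add0r //.
  exact: norm_scaled_dist_weight_le.
exact: norm_max_weight_le.
Qed.

Lemma norm_c_le r : (r < m)%N -> `|c r| <= C.
Proof. by move=> /c_le; apply: le_trans; rewrite ler_peMl ?ler1n. Qed.

Lemma norm_net_weight_le k i j : `|net_weight k i j| <= C.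
Proof.
have C_ge0 : 0 <= C := le_trans ler01 C_ge1.
rewrite /net_weight; case: ifP => [_|/negbT k_gt0]; last rewrite -lt0n in k_gt0.
  rewrite /input_weight; case: ifP => _; rewrite ?normr0 // normrM norm_sgn mul1r.
  by apply: le_trans C_ge1; apply: norm_nat_bool_le.
case: ifP => _; first by case: ifP => _; rewrite ?norm_max_weight_le ?normr0.
case: ifP => _.
  case: i => [|[|[|i]]] /=;
    rewrite ?mulNr ?normrN ?norm_scaled_dist_weight_le ?norm_max_dist_weight_le //.
  by case: ifP => _; rewrite ?normr0 // (le_trans (norm_dist_weight_le _ _ _) C_ge1).
by case: i => [|[|i]] /=; rewrite ?normrN ?norm_max_weight_le ?normr0.
Qed.

Lemma norm_net_bias_le k i : `|net_bias k i| <= C.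
Proof.
have C_ge0 : 0 <= C := le_trans ler01 C_ge1.
have norm_max_bias_le k' : `|max_bias k'| <= C.
  by rewrite /max_bias; case: ifP => _; rewrite ?normr0 ?norm_c_le //; lia.
rewrite /net_bias; case: ifP => _.
  rewrite /input_bias; case: ifP => lt_i; rewrite ?normr0 // mulNr normrN normrM norm_sgn mul1r.
  by apply: ycoord_le; rewrite ltn_divLR //; lia.
case: ifP => _; first by case: ifP => _; rewrite ?norm_max_bias_le ?normr0.
case: ifP => lt_km; last by case: i => [|[|i]] /=; rewrite ?normrN ?norm_max_bias_le ?normr0.
case: i => [|[|[|i]]] /=; rewrite ?normrN ?norm_c_le ?normr0 //.
rewrite /max_bias; case: ifP => [/eqP k1|_]; last by rewrite sub0r normrN norm_c_le.
subst k; apply: le_trans (ler_normB _ _) _.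
by have := c_le (ltnW lt_km); have := c_le lt_km; lra.
Qed.

Lemma bigmax_norm_pack_le dd n ls :
  \big[Num.max/0]_(p < dd) `|pack net_weight net_bias 0 n ls p| <= C.
Proof.
have C_ge0 : 0 <= C := le_trans ler01 C_ge1.
apply: bigmax_le => // p _; apply: norm_pack_le => //.
  exact: norm_net_weight_le.
exact: norm_net_bias_le.
Qed.

End Bounds.
End Construction.

Section ExtendedBounds.
Variable R : realType.

Lemma lee_mul_ereal_inf (T : Type) (A : set T) (g : T -> R) (a t : R) : 0 <= a -> A !=set0 ->
  (forall z, A z -> t <= a * g z) -> (t%:E <= a%:E * ereal_inf [set (g z)%:E | z in A])%E.
Proof.
move=> a_ge0 [z0 Az0] t_le; have [a0|a_neq0] := eqVneq a 0.
  by rewrite a0 mul0e lee_fin; have := t_le _ Az0; rewrite a0 mul0r.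
have a_gt0 : 0 < a by rewrite lt_def a_neq0.
have -> : t%:E = (a%:E * (t / a)%:E)%E by rewrite -EFinM mulrC divfK.
rewrite lee_wpmul2l ?lee_fin //; apply: le_ereal_inf_tmp => _ [z Az <-].
by rewrite lee_fin ler_pdivrMr // mulrC t_le.
Qed.

Lemma bigmax_le_ereal_sup (T : eqType) (s : seq T) (g : T -> R) : s != [::] ->
  (forall z, 0 <= g z) ->
  ((\big[Num.max/0]_(z <- s) g z)%:E <= ereal_sup [set (g z)%:E | z in [set` s]])%E.
Proof.
case: s => [//|z0 s] _ g_ge0; set S := ereal_sup _.
have g_le_sup z : z \in z0 :: s -> ((g z)%:E <= S)%E.
  by move=> zs; apply: ereal_sup_ubound; exists z.
rewrite big_seq; apply: (big_ind (fun t : R => (t%:E <= S)%E)) => //.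
  by apply: le_trans (g_le_sup _ (mem_head _ _)); rewrite lee_fin.
by move=> a b; rewrite EFin_max ge_max => -> ->.
Qed.

End ExtendedBounds.

Section Approximation.
Variables (R : realType) (d : nat) (D : set 'rV[R]_d) (f : 'rV[R]_d -> R) (L : R).
Hypothesis f_lip : forall a b, D a -> D b -> `|f a - f b| <= L * dist1 a b.

Lemma lipschitz_const_ge0 a b : D a -> D b -> a != b -> 0 <= L.
Proof.
move=> Da Db neq_ab; rewrite -(pmulr_lge0 _ (dist1_gt0 neq_ab)).
exact: le_trans (normr_ge0 _) (f_lip Da Db).
Qed.

Section ConeMax.
Variables (m : nat) (y : nat -> 'rV[R]_d).
Hypothesis yD : forall r, (r < m)%N -> D (y r).
Local Notation cone_f x := (cone L y (fun r => f (y r)) x).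
Local Notation cone_max_f x := (cone_max L y (fun r => f (y r)) x).

Lemma cone_le_lipschitz x r : D x -> (r < m)%N -> cone_f x r <= f x.
Proof.
move=> Dx lt_rm; rewrite /cone lerBlDr -lerBlDl dist1C.
exact: le_trans (ler_norm _) (f_lip (yD lt_rm) Dx).
Qed.

Lemma dist_cone_max_le x r : D x -> (r < m)%N ->
  `|f x - cone_max_f x m| <= 2 * L * dist1 x (y r).
Proof.
move=> Dx lt_rm; have m_gt0 : (0 < m)%N by lia.
have le_fx : cone_max_f x m <= f x by apply: cone_max_le => // r' /(cone_le_lipschitz Dx).
rewrite ger0_norm ?subr_ge0 //; apply: le_trans (_ : f x - cone_f x r <= _).
  by rewrite lerB // le_cone_max.
have := le_trans (ler_norm _) (f_lip Dx (yD lt_rm)); rewrite /cone; lra.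
Qed.

End ConeMax.

Lemma dist_clip_cone_max_le (u v : \bar R) (M : seq 'rV[R]_d) x :
  u != +oo%E -> v != -oo%E -> (u <= (f x)%:E <= v)%E -> (forall z, z \in M -> D z) ->
  0 <= L -> M != [::] -> D x ->
  (`|f x - clip u v (cone_max L (nth 0 M) (fun r => f (nth 0 M r)) x (size M))|%:E <=
     (2 * L)%:E * ereal_inf [set (dist1 x z)%:E | z in [set` M]])%E.
Proof.
move=> u_fin v_fin fx_uv M_D L_ge0 M_nnil Dx.
apply: lee_mul_ereal_inf; first by rewrite mulr_ge0.
  by case: M M_nnil M_D => [//|z M] _ _; exists z; rewrite /= mem_head.
move=> z Mz; rewrite -(nth_index 0 Mz).
apply: le_trans (dist_clip_le _ u_fin v_fin fx_uv) _.
apply: dist_cone_max_le Dx _; last by rewrite index_mem.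
by move=> r lt_rm; apply/M_D/mem_nth.
Qed.

End Approximation.

Section WeightBound.
Variables (R : realType) (d : nat) (M : seq 'rV[R]_d) (f : 'rV[R]_d -> R) (L : R).

Definition weight_bound := Num.max 1 (Num.max L
  (Num.max (\big[Num.max/0]_(z <- M) normInf z) (2 * \big[Num.max/0]_(z <- M) `|f z|))).

Lemma weight_bound_ge1 : 1 <= weight_bound.
Proof. by rewrite le_max lexx. Qed.

Lemma L_le_weight_bound : L <= weight_bound.
Proof. by rewrite /weight_bound le_max (le_max L) lexx orbT. Qed.

Lemma normInf_le_weight_bound z : z \in M -> normInf z <= weight_bound.
Proof.
move=> Mz; apply: (@le_trans _ _ (\big[Num.max/0]_(z <- M) normInf z)).
  exact: le_bigmax_seq.
by rewrite /weight_bound !le_max lexx !orbT.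
Qed.

Lemma norm_le_weight_bound z : z \in M -> 2 * `|f z| <= weight_bound.
Proof.
move=> Mz; have le_bigmax (g : 'rV[R]_d -> R) : g z <= \big[Num.max/0]_(z <- M) g z.
  exact: le_bigmax_seq.
apply: le_trans (ler_wpM2l _ (le_bigmax (fun z => `|f z|))) _ => //.
by rewrite /weight_bound !le_max lexx !orbT.
Qed.

Lemma weight_bound_le_ereal_sup : M != [::] ->
  (weight_bound%:E <= Order.max 1%E (Order.max L%:E
     (Order.max (ereal_sup [set (normInf z)%:E | z in [set` M]])
        (2%:E * ereal_sup [set (`|f z|)%:E | z in [set` M]]))))%E.
Proof.
move=> M_nnil; rewrite /weight_bound !EFin_max EFinM; do 2 apply: le_max2 => //.
apply: le_max2; first by apply: bigmax_le_ereal_sup => // z; apply: bigmax_ge_id.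
by apply: lee_wpmul2l; rewrite ?lee_fin ?bigmax_le_ereal_sup.
Qed.

End WeightBound.

Theorem corollary3p8 (R : realType) (d dd LL : nat) (L : R) (u v : \bar R)
  (D : set 'rV[R]_d) (f : 'rV[R]_d -> R) (M : seq 'rV[R]_d) (l : seq nat) :
  (0 < d)%N -> (0 < dd)%N -> (0 < LL)%N ->
  u != +oo%E -> v != -oo%E -> (u < v)%E ->
  (forall x, D x -> (u <= (f x)%:E <= v)%E) ->
  (forall x y, D x -> D y -> `|f x - f y| <= L * dist1 x y) ->
  uniq M -> (2 <= size M)%N -> (forall z, z \in M -> D z) ->
  size l = LL.+1 -> all (fun n => 0 < n)%N l ->
  (size M + 1 <= LL)%N ->
  (\sum_(1 <= i < LL.+1) nth 0 l i * (nth 0 l i.-1 + 1) <= dd)%N ->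
  nth 0%N l 0 = d -> nth 0%N l LL = 1%N ->
  (2 * d * size M <= nth 0 l 1)%N ->
  (forall k, (2 <= k <= size M)%N -> (2 * size M + 3 - 2 * k <= nth 0 l k)%N) ->
  (forall i, (size M < i < LL)%N -> (2 <= nth 0 l i)%N) ->
  exists th : 'I_dd -> R,
    ((\big[Num.max/0]_(i < dd) `|th i|)%:E <=
       Order.max 1%E (Order.max L%:E
         (Order.max (ereal_sup [set (normInf z)%:E | z in [set` M]])
            (2%:E * ereal_sup [set (`|f z|)%:E | z in [set` M]]))))%E /\
    (ereal_sup [set (`|f x - realization th l u v x|)%:E | x in D] <=
       (2 * L)%:E * ereal_sup [set ereal_inf [set (dist1 x y)%:E | y in [set` M]]
                               | x in D])%E.
Proof.
move=> _ _ _ u_fin v_fin _ f_range f_lip uniq_M size_M M_D size_l _ lt_ML size_net l_0 l_last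
  l_1 l_le_m l_gt_m.
set m := size M in size_M lt_ML l_1 l_le_m l_gt_m.
rewrite addn1 in lt_ML; have m_gt0 : (0 < m)%N by lia.
have M_nnil : M != [::] by rewrite -size_eq0 -/m; lia.
pose y r := nth 0 M r.
have y_M r : (r < m)%N -> y r \in M by exact: mem_nth.
have L_ge0 : 0 <= L.
  by apply: (lipschitz_const_ge0 f_lip (M_D _ (y_M 0%N _)) (M_D _ (y_M 1%N _))); rewrite ?nth_uniq.
pose th (p : 'I_dd) :=
  pack (net_weight d m LL L) (net_bias m LL y (fun r => f (y r))) 0 d (behead l) p.
have pack_le : (pack_size d (behead l) <= dd)%N.
  have l_eq : l = d :: behead l by move: size_l l_0; case: (l) => [|? ?] //= _ ->.
  by rewrite pack_size_sum -l_eq size_behead size_l.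
exists th; split.
  apply: le_trans (weight_bound_le_ereal_sup f L M_nnil); rewrite lee_fin.
  apply: bigmax_norm_pack_le => //; [exact: weight_bound_ge1 | exact: L_le_weight_bound | |].
    move=> r q lt_rm; apply: le_trans (normInf_le_weight_bound f L (y_M _ lt_rm)).
    exact: norm_ext_le_normInf.
  by move=> r lt_rm; apply/norm_le_weight_bound/y_M.
apply: ge_ereal_sup => _ [x Dx <-].
rewrite (realization_eq u v x m_gt0 lt_ML size_l l_last l_1 l_le_m l_gt_m l_0 (fun=> erefl)
  pack_le).
apply: le_trans (dist_clip_cone_max_le f_lip u_fin v_fin (f_range _ Dx) M_D L_ge0 M_nnil Dx) _.
by apply: lee_wpmul2l; [rewrite lee_fin mulr_ge0 | apply: ereal_sup_ubound; exists x].
Qed.
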